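(* Let $f=1-xy$, $g=1-xy^2$, $h=1-y$ in $\mathbb{Z}[x,y]$. There exist polynomials $\xi_m\in\mathbb{Z}[x,y]$ for all integers $m\geq1$ such that (1) (a) $\xi_1=g$; (b) $\xi_{m+1}=f\xi_m+x^mh^{m+1}$; (c) $\xi_{m+1}=xh\xi_m+f^{m+1}$; (2) $\xi_m$ vanishes to order $m$ at $t_0=(1,1)$; (3) the Newton polygon of $\xi_m$ is the triangle with vertices $(0,0)$, $(m-1,0)$, $(m,m+1)$; (4) $\xi_m$ is irreducible in $K[x,y]$ for every field $K$.
   Context: The Newton polygon of a polynomial is the convex hull of the exponent vectors of the monomials appearing with nonzero coefficient. *)

(* bivariate polynomials via multinomials' {mpoly R[2]}.
   Variable 'X_0 is x, variable 'X_1 is y; a monomial m : 'X_{1..2}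
   has exponent vector (m 0, m 1). *)
From HB Require Import structures.
From mathcomp Require Import all_boot all_order all_algebra.
From mathcomp Require Export mpoly.
Set Implicit Arguments. Unset Strict Implicit. Unset Printing Implicit Defensive.
Import Order.TTheory GRing.Theory Num.Theory.
Local Open Scope ring_scope.

Definition i0 : 'I_2 := @Ordinal 2 0 isT.
Definition i1 : 'I_2 := @Ordinal 2 1 isT.

Definition xvar {R : nzRingType} : {mpoly R[2]} := 'X_i0.
Definition yvar {R : nzRingType} : {mpoly R[2]} := 'X_i1.

Definition expvec (m : 'X_{1..2}) : rat * rat := ((m i0)%:R, (m i1)%:R).

Definition in_conv (S : seq (rat * rat)) (p : rat * rat) : Prop :=
  exists lam : 'I_(size S) -> rat,
    (forall i, 0 <= lam i) /\ \sum_i lam i = 1 /\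
    p.1 = \sum_i lam i * (nth (0,0) S i).1 /\
    p.2 = \sum_i lam i * (nth (0,0) S i).2.

Definition newton_polygon {R : nzRingType} (p : {mpoly R[2]}) : rat * rat -> Prop :=
  in_conv [seq expvec m | m <- msupp p].

Definition shift_at {R : comNzRingType} (a b : R) (p : {mpoly R[2]}) : {mpoly R[2]} :=
  p \mPo [tuple 'X_i0 + a%:MP; 'X_i1 + b%:MP].

Definition vanishes_to_order {R : comNzRingType} (p : {mpoly R[2]}) (a b : R) (k : nat) : Prop :=
  (forall m, m \in msupp (shift_at a b p) -> (k <= mdeg m)%N) /\
  (exists2 m, m \in msupp (shift_at a b p) & mdeg m = k).

Definition irreducible_elt {R : idomainType} (p : R) : Prop :=
  p != 0 /\ p \isn't a GRing.unit /\
  forall a b : R, p = a * b -> a \is a GRing.unit \/ b \is a GRing.unit.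

Definition to_field (K : fieldType) (p : {mpoly int[2]}) : {mpoly K[2]} :=
  map_mpoly (fun z : int => z%:~R) p.

From mathcomp Require Import all_boot all_order all_algebra.
From mathcomp Require Import mpoly ring lra zify.

(* Start the recurrence (b) at xi_0 = y.  Identity (c) then follows from
   (1 - x) xi_m = f^(m+1) - x^m h^(m+1), proved by induction.

   Support: the apex monomial (-1)^m x^m y^(m+1) of xi_m cancels against the
   y^(m+1) term of x^m h^(m+1) in xi_(m+1), so xi_m minus its apex monomial
   satisfies a recurrence that keeps it inside the region b <= a below the
   edge from (m-1,0) to (m,m+1).  With the coefficients 1, 1, (-1)^m at the
   three vertices this gives the Newton polygon.

   Vanishing: shifted to (1,1), the recurrence reads
   xi_(m+1) = -(x(y+1) + y) xi_m + (x+1)^m (-y)^(m+1), so every monomial has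
   degree >= m and y^m has coefficient (-1)^m (m+1).

   Irreducibility: over a domain the maximal value of an additive weight on
   the support is additive under products.  Apply this to P = A B with the
   weights -(a+b), m b - (m+1) a, b - a and a: both factors contain the
   monomial 1, one of them lies in {b <= a} while the other reaches a monomial
   with b = a + 1 and hence a >= m, and then the first one is a constant. *)

Import Order.TTheory GRing.Theory Num.Theory.
Local Open Scope ring_scope.

(** * Supports of polynomials *)

Section Support.
Context {n : nat} {R : nzRingType}.
Implicit Types (p q : {mpoly R[n]}) (S : 'X_{1..n} -> Prop).

Definition supp_in S p := forall m, m \in msupp p -> S m.

Lemma supp_inW {S S' p} : (forall m, S m -> S' m) -> supp_in S p -> supp_in S' p.
Proof. by move=> SS' Sp m /Sp /SS'. Qed.

Lemma supp_in0 {S} : supp_in S 0.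
Proof. by move=> m; rewrite msupp0. Qed.

Lemma supp_inD {S p q} : supp_in S p -> supp_in S q -> supp_in S (p + q).
Proof. by move=> Sp Sq m /msuppD_le; rewrite mem_cat => /orP[/Sp|/Sq]. Qed.

Lemma supp_inN {S p} : supp_in S p -> supp_in S (- p).
Proof. by move=> Sp m; rewrite (perm_mem (msuppN p)) => /Sp. Qed.

Lemma supp_inB {S p q} : supp_in S p -> supp_in S q -> supp_in S (p - q).
Proof. by move=> Sp /supp_inN; apply: supp_inD. Qed.

Lemma supp_inZ {S c p} : supp_in S p -> supp_in S (c *: p).
Proof. by move=> Sp m /msuppZ_le /Sp. Qed.

Lemma supp_in_sum {S} {I : Type} {r : seq I} {P : pred I} {F : I -> {mpoly R[n]}} :
  (forall i, P i -> supp_in S (F i)) -> supp_in S (\sum_(i <- r | P i) F i).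
Proof.
move=> SF; apply: (big_ind (supp_in S)) => //; first exact: supp_in0.
by move=> p q; apply: supp_inD.
Qed.

Lemma supp_inX {S m} : S m -> supp_in S 'X_[m].
Proof. by move=> Sm m'; rewrite msuppX inE => /eqP ->. Qed.

Lemma supp_in1 {S} : S 0%MM -> supp_in S 1.
Proof. by rewrite -mpolyX0; apply: supp_inX. Qed.

Lemma supp_inM {S1 S2 S3 p q} : supp_in S1 p -> supp_in S2 q ->
  (forall a b, S1 a -> S2 b -> S3 (a + b)%MM) -> supp_in S3 (p * q).
Proof.
move=> S1p S2q S123 m /msuppM_le /allpairsP [[a b] /= [ap bq ->]].
exact: S123 (S1p _ ap) (S2q _ bq).
Qed.

Lemma supp_in_mcoeff {S p m} : supp_in S p -> ~ S m -> p@_m = 0.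
Proof. by move=> Sp nSm; apply/eqP; rewrite mcoeff_eq0; apply: contra_notN nSm => /Sp. Qed.

Lemma msupp_signM k p : perm_eq (msupp ((-1) ^+ k * p)) (msupp p).
Proof. by rewrite -signr_odd mulr_sign; case: odd => //; apply: msuppN. Qed.

Lemma mcoeff_signM k p m : ((-1) ^+ k * p)@_m = (-1) ^+ k * p@_m.
Proof. by rewrite -signr_odd -[in RHS]signr_odd !mulr_sign; case: odd; rewrite ?mcoeffN. Qed.

Lemma supp_in_signM {S k p} : supp_in S p -> supp_in S ((-1) ^+ k * p).
Proof. by move=> Sp m; rewrite (perm_mem (msupp_signM k p)) => /Sp. Qed.

End Support.

(** * Weighted degrees *)

Lemma seq_argmax {T : eqType} (f : T -> int) {s : seq T} : s != [::] ->
  exists2 x, x \in s & forall y, y \in s -> f y <= f x.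
Proof.
elim: s => [//|a [|b s] IH] _.
  by exists a => [|y]; rewrite ?mem_head // inE => /eqP ->.
have [x xs xmax] := IH isT.
have [le_xa|lt_ax] := lerP (f x) (f a).
  exists a => [|y]; first exact: mem_head.
  by rewrite inE => /predU1P[-> //|/xmax/le_trans]; apply.
exists x => [|y]; first by rewrite inE xs orbT.
by rewrite inE => /predU1P[->|/xmax //]; apply: ltW.
Qed.

Section WeightedDegree.
Context {n : nat} {R : nzRingType} (w : 'X_{1..n} -> int).
Implicit Types (p q : {mpoly R[n]}).

Definition has_wdeg p c :=
  (forall m, m \in msupp p -> w m <= c) /\ exists2 m, m \in msupp p & w m = c.

Lemma has_wdeg_exists {p} : p != 0 -> exists c, has_wdeg p c.
Proof.
by rewrite -msupp_eq0 => /(seq_argmax w) [m mp mmax]; exists (w m); split => //; exists m.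
Qed.

Lemma has_wdeg_uniq {p c c'} : has_wdeg p c -> has_wdeg p c' -> c = c'.
Proof.
move=> [le_c [m mp wm]] [le_c' [m' m'p wm']].
by apply/le_anti; rewrite -{1}wm -{2}wm' le_c ?le_c'.
Qed.

End WeightedDegree.

Section WeightedDegreeMul.
Context {n : nat} {R : idomainType} {w : 'X_{1..n} -> int}.
Hypothesis wD : forall a b, w (a + b)%MM = w a + w b.
Implicit Types (p q : {mpoly R[n]}).

Let top p c := \sum_(m <- msupp p | w m == c) p@_m *: 'X_[m].
Let low p c := \sum_(m <- msupp p | w m != c) p@_m *: 'X_[m].

Let top_low p c : p = top p c + low p c.
Proof. by rewrite {1}[p]mpolyE (bigID (fun m => w m == c)). Qed.

Let supp_top p c : supp_in (fun m => w m = c) (top p c).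
Proof. by apply: supp_in_sum => m /eqP wm; apply: supp_inZ; apply: supp_inX. Qed.

Let supp_low p c : (forall m, m \in msupp p -> w m <= c) ->
  supp_in (fun m => w m < c) (low p c).
Proof.
move=> le_c; rewrite /low big_seq_cond; apply: supp_in_sum => m /andP[mp neq_c].
by apply: supp_inZ; apply: supp_inX; rewrite lt_neqAle neq_c le_c.
Qed.

Let top_neq0 p c : has_wdeg w p c -> top p c != 0.
Proof.
move=> [le_c [m mp wm]]; apply: contraTneq mp => top0.
rewrite mcoeff_msupp negbK (top_low p c) top0 add0r.
by apply/eqP/(supp_in_mcoeff (supp_low p c le_c)); rewrite /= wm ltxx.
Qed.

Lemma has_wdegM {p q a b} : has_wdeg w p a -> has_wdeg w q b -> has_wdeg w (p * q) (a + b).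
Proof.
move=> wp wq; have [le_a _] := wp; have [le_b _] := wq.
split=> [m /msuppM_le /allpairsP [[m1 m2] /= [m1p m2q ->]]|].
  by rewrite wD lerD ?le_a ?le_b.
have tt0 : top p a * top q b != 0 by rewrite mulf_neq0 ?top_neq0.
have mtt := mlead_supp tt0; set m := mlead _ in mtt.
have wm : w m = a + b.
  apply: (supp_inM (S3 := fun m => w m = a + b) (supp_top p a) (supp_top q b) _ _ mtt).
  by move=> m1 m2 /= w1 w2; rewrite wD w1 w2.
exists m => //.
have below (r : {mpoly R[n]}) : supp_in (fun m => w m < a + b) r -> r@_m = 0.
  by move/supp_in_mcoeff; apply; rewrite wm ltxx.
have e1 : (top p a * low q b)@_m = 0.
  apply/below/(supp_inM (supp_top p a) (supp_low q b le_b)) => m1 m2 /= w1 w2.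
  by rewrite wD w1 ltrD2l.
have e2 : (low p a * q)@_m = 0.
  apply/below/(supp_inM (supp_low p a le_a) le_b) => m1 m2 /= w1 w2.
  by rewrite wD ltr_leD.
rewrite mcoeff_msupp {1}(top_low p a) mulrDl mcoeffD e2 addr0.
by rewrite {1}(top_low q b) mulrDr mcoeffD e1 addr0 -mcoeff_msupp.
Qed.

Lemma has_wdeg_factors {p q c} : p * q != 0 -> has_wdeg w (p * q) c ->
  exists cp cq, [/\ has_wdeg w p cp, has_wdeg w q cq & cp + cq = c].
Proof.
move=> pq0 wpq; have [p0 q0] : p != 0 /\ q != 0.
  by split; apply: contraNneq pq0 => ->; rewrite ?mul0r ?mulr0.
have [[cp wp] [cq wq]] := (has_wdeg_exists w p0, has_wdeg_exists w q0).
by exists cp, cq; split=> //; apply: has_wdeg_uniq (has_wdegM wp wq) wpq.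
Qed.

End WeightedDegreeMul.

Section Factors.
Context {n : nat} {R : idomainType}.
Implicit Types (p q : {mpoly R[n]}).

Lemma mconst_in_factor {p q} : 0%MM \in msupp (p * q) -> 0%MM \in msupp p.
Proof.
move=> pq0; have pq_neq0 : p * q != 0 by apply: contraTneq pq0 => ->; rewrite msupp0.
pose w (m : 'X_{1..n}) : int := - (mdeg m)%:Z.
have wD a b : w (a + b)%MM = w a + w b by rewrite /w mdegD PoszD opprD.
have w_le0 m : w m <= 0 by rewrite /w oppr_le0.
have wpq : has_wdeg w (p * q) 0 by split=> [m _|]; last exists 0%MM; rewrite // /w mdeg0.
have [cp [cq [[_ [m mp wm]] [_ [m' m'q wm']] cpq]]] := has_wdeg_factors wD pq_neq0 wpq.
have : mdeg m = 0%N by move: (w_le0 m) (w_le0 m'); rewrite /w in wm wm' *; lia.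
by move/eqP; rewrite mdeg_eq0 => /eqP <-.
Qed.

Lemma wdeg_le0_factor {w : 'X_{1..n} -> int} {p q} :
  (forall a b, w (a + b)%MM = w a + w b) -> 0%MM \in msupp (p * q) ->
  supp_in (fun m => w m <= 0) (p * q) -> supp_in (fun m => w m <= 0) p.
Proof.
move=> wD pq0 pq_le0.
have pq_neq0 : p * q != 0 by apply: contraTneq pq0 => ->; rewrite msupp0.
have w0 : w 0%MM = 0 by have := wD 0%MM 0%MM; rewrite addm0; lia.
have wpq : has_wdeg w (p * q) 0 by split; last exists 0%MM.
have [cp [cq [[le_cp _] [le_cq _] cpq]]] := has_wdeg_factors wD pq_neq0 wpq.
have q0 : 0%MM \in msupp q by apply: (mconst_in_factor (q := p)); rewrite mulrC.
have := le_cp _ (mconst_in_factor pq0); have := le_cq _ q0.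
by rewrite w0 => cq_ge0 cp_ge0 m /le_cp; lia.
Qed.

End Factors.

Lemma mpoly_unit_supp0 {K : fieldType} {n} {p : {mpoly K[n]}} :
  supp_in (fun m => m = 0%MM) p -> 0%MM \in msupp p -> p \is a GRing.unit.
Proof.
have -> : (p \is a GRing.unit) = (p == (p@_0)%:MP) && (p@_0 \is a GRing.unit) by [].
move=> p_const p0; apply/andP; split; last by rewrite unitfE -mcoeff_msupp.
apply/eqP/mpolyP => m; rewrite mcoeffC.
have [->|/eqP m_neq0] := eqVneq m 0%MM; first by rewrite mulr1.
by rewrite mulr0 (supp_in_mcoeff p_const m_neq0).
Qed.

Definition mnm2E := (@mnmDE 2, @mnm0E 2, @mulmnE 2, @mnm1E 2).

Lemma mnm2_eq0 (m : 'X_{1..2}) : m i0 = 0%N -> m i1 = 0%N -> m = 0%MM.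
Proof.
move=> m0 m1; apply/mnmP => -[[|[|//]] i_lt2]; rewrite mnm0E.
  by have -> : Ordinal i_lt2 = i0 by apply: val_inj.
by have -> : Ordinal i_lt2 = i1 by apply: val_inj.
Qed.

Definition wlin (c0 c1 : int) (m : 'X_{1..2}) : int := c0 * (m i0)%:Z + c1 * (m i1)%:Z.

Lemma wlinD c0 c1 a b : wlin c0 c1 (a + b)%MM = wlin c0 c1 a + wlin c0 c1 b.
Proof. by rewrite /wlin !mnmDE !PoszD; ring. Qed.

Definition apex (m : nat) : 'X_{1..2} := (U_(i0) *+ m + U_(i1) *+ m.+1)%MM.

Lemma apex0 m : apex m i0 = m.
Proof. by rewrite /apex !mnm2E /= mul1n mul0n addn0. Qed.

Lemma apex1 m : apex m i1 = m.+1.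
Proof. by rewrite /apex !mnm2E /= mul1n mul0n. Qed.

(* The triangle with vertices (0,0), (m,0), (m,m+1). *)
Definition outer_triangle (m : nat) (mm : 'X_{1..2}) : Prop :=
  (mm i0 <= m)%N /\ (m * mm i1 <= m.+1 * mm i0)%N.

(* The triangle with vertices (0,0), (m-1,0), (m,m+1). *)
Definition newton_triangle (m : nat) (mm : 'X_{1..2}) : Prop :=
  outer_triangle m mm /\ (m.+1 * mm i0 + m.+1 <= mm i1 + m * m.+1)%N.

(** * An irreducibility criterion *)

Section Irreducibility.
Variables (K : fieldType) (m : nat) (P : {mpoly K[2]}).
Hypotheses (m_gt0 : (0 < m)%N) (P_outer : supp_in (outer_triangle m) P)
  (P0 : 0%MM \in msupp P) (P_apex : apex m \in msupp P).

Let slope_factor A B : P = A * B -> supp_in (fun mm => m * mm i1 <= m.+1 * mm i0)%N A.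
Proof.
move=> PAB.
have A_le0 : supp_in (fun mm => wlin (- m.+1%:Z) m%:Z mm <= 0) A.
  apply: (wdeg_le0_factor (q := B) (wlinD _ _)); rewrite -PAB //.
  by move=> mm /P_outer [_]; rewrite /wlin; lia.
by move=> mm /A_le0; rewrite /wlin; lia.
Qed.

Let unit_factor A B : P = A * B -> (exists2 mm, mm \in msupp B & mm i1 = (mm i0).+1) ->
  supp_in (fun mm => mm i1 <= mm i0)%N A -> A \is a GRing.unit.
Proof.
move=> PAB [mB mBB eB] A_diag.
have mB_ge : (m <= mB i0)%N.
  by have := slope_factor B A (etrans PAB (mulrC _ _)) _ mBB; rewrite eB; nia.
have A0 : 0%MM \in msupp A by apply: (mconst_in_factor (q := B)); rewrite -PAB.
have PAB0 : A * B != 0 by rewrite -PAB; apply: contraTneq P0 => ->; rewrite msupp0.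
have wP : has_wdeg (wlin 1 0) (A * B) m.
  rewrite -PAB; split=> [mm /P_outer [le_m _]|]; first by rewrite /wlin; lia.
  by exists (apex m); rewrite // /wlin apex0; lia.
have [cA [cB [[le_cA _] [le_cB _] cAB]]] := has_wdeg_factors (wlinD _ _) PAB0 wP.
have := le_cA _ A0; have := le_cB _ mBB; rewrite /wlin !mnm0E => cB_ge cA_ge.
apply: mpoly_unit_supp0 A0 => mm mmA; apply: mnm2_eq0.
  by have := le_cA _ mmA; rewrite /wlin; lia.
by have := le_cA _ mmA; have := A_diag _ mmA; rewrite /wlin; lia.
Qed.

Lemma irreducible_outer_triangle : irreducible_elt P.
Proof.
have P_neq0 : P != 0 by apply: contraTneq P0 => ->; rewrite msupp0.
split=> //; split.
  apply/negP => /andP[/eqP P_const _]; move: P_apex; rewrite P_const msuppC.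
  by case: eqP => // _; rewrite inE => /eqP apex_eq0; move: (apex1 m); rewrite apex_eq0 mnm0E.
move=> A B PAB; have PAB0 : A * B != 0 by rewrite -PAB.
have wP : has_wdeg (wlin (-1) 1) (A * B) 1.
  rewrite -PAB; split=> [mm /P_outer [le_m slope]|]; first by rewrite /wlin; nia.
  by exists (apex m); rewrite // /wlin apex0 apex1; lia.
have [cA [cB [[le_cA [mA mAA eA]] [le_cB [mB mBB eB]] cAB]]] :=
  has_wdeg_factors (wlinD _ _) PAB0 wP.
have A0 : 0%MM \in msupp A by apply: (mconst_in_factor (q := B)); rewrite -PAB.
have B0 : 0%MM \in msupp B by apply: (mconst_in_factor (q := A)); rewrite mulrC -PAB.
have := le_cA _ A0; have := le_cB _ B0; rewrite /wlin !mnm0E => cB_ge0 cA_ge0.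
have [cB1|cA1] : cB = 1 \/ cA = 1 by lia.
- left; apply: (unit_factor A B PAB).
    by exists mB => //; move: eB; rewrite /wlin cB1; lia.
  by move=> mm /le_cA; rewrite /wlin; lia.
- right; apply: (unit_factor B A); first by rewrite mulrC.
    by exists mA => //; move: eA; rewrite /wlin cA1; lia.
  by move=> mm /le_cB; rewrite /wlin; lia.
Qed.

End Irreducibility.

(** * The polynomials xi_m *)

Fixpoint xi {R : comPzRingType} (x y : R) (m : nat) : R :=
  if m is k.+1 then (1 - x * y) * xi x y k + x ^+ k * (1 - y) ^+ k.+1 else y.

Lemma xiS {R : comPzRingType} (x y : R) m :
  xi x y m.+1 = (1 - x * y) * xi x y m + x ^+ m * (1 - y) ^+ m.+1.
Proof. by []. Qed.

Definition xi_core {R : comPzRingType} (x y : R) (m : nat) : R :=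
  xi x y m - (-1) ^+ m * (x ^+ m * y ^+ m.+1).

Section XiIdentities.
Context {R : comPzRingType} (x y : R).

Lemma xi1 : xi x y 1 = 1 - x * y ^+ 2.
Proof. by rewrite /= expr0 mul1r expr1; ring. Qed.

Lemma mul1Bx_xi m : (1 - x) * xi x y m = (1 - x * y) ^+ m.+1 - x ^+ m * (1 - y) ^+ m.+1.
Proof.
elim: m => [|m IH]; first by rewrite /= !expr1 expr0; ring.
by rewrite xiS mulrDr mulrCA IH !exprS; ring.
Qed.

Lemma xiS_dual m : xi x y m.+1 = x * (1 - y) * xi x y m + (1 - x * y) ^+ m.+1.
Proof.
rewrite xiS -[(1 - x * y) ^+ m.+1](subrK (x ^+ m * (1 - y) ^+ m.+1)) -mul1Bx_xi.
ring.
Qed.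

Lemma rmorph_xi {S : comPzRingType} (f : {rmorphism R -> S}) m :
  f (xi x y m) = xi (f x) (f y) m.
Proof.
elim: m => [|m IH] //=.
by rewrite rmorphD !rmorphM !rmorphXn !rmorphB !rmorph1 rmorphM IH.
Qed.

Lemma xi_core0 : xi_core x y 0 = 0.
Proof. by rewrite /xi_core /= expr0 !mul1r expr1 subrr. Qed.

Lemma xi_coreS m : xi_core x y m.+1 =
  (1 - x * y) * xi_core x y m + x ^+ m * ((1 - y) ^+ m.+1 - (- y) ^+ m.+1).
Proof. by rewrite /xi_core xiS (exprNn y) !exprS; ring. Qed.

Lemma xi_shiftS m : xi (x + 1) (y + 1) m.+1 =
  - (x * (y + 1) + y) * xi (x + 1) (y + 1) m + (x + 1) ^+ m * (- y) ^+ m.+1.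
Proof. by rewrite xiS; congr (_ * _ + _ * _); [ring | congr (_ ^+ _); ring]. Qed.

End XiIdentities.

Lemma xi00 {R : comPzRingType} m : xi (0 : R) 0 m.+1 = 1.
Proof.
elim: m => [|m IH]; first by rewrite /= mulr0 expr0 subr0 expr1 mul1r add0r.
by rewrite xiS IH mulr0 subr0 mul1r expr0n mul0r addr0.
Qed.


Lemma mcoeffXM_eq0 {n} {R : nzRingType} (i : 'I_n) (p : {mpoly R[n]}) (m : 'X_{1..n}) :
  m i = 0%N -> ('X_i * p)@_m = 0.
Proof.
pose S (mm : 'X_{1..n}) := (0 < mm i)%N.
move=> mi0; apply: (supp_in_mcoeff (S := S)); last by rewrite /S mi0.
apply: (supp_inM (S1 := S) (S2 := fun _ => True)) => //.
  by apply: supp_inX; rewrite /S mnm1E eqxx.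
by move=> a b a_gt0 _; rewrite /S mnmDE ltn_addr.
Qed.

Lemma mcoeffXM {n} {R : comNzRingType} (p : {mpoly R[n]}) m m' :
  ('X_[m] * p)@_(m + m') = p@_m'.
Proof. by rewrite mulrC mcoeffMX. Qed.

Lemma supp_in_mdegM {n} {R : nzRingType} {p q : {mpoly R[n]}} {i j} :
  supp_in (fun m => i <= mdeg m)%N p -> supp_in (fun m => j <= mdeg m)%N q ->
  supp_in (fun m => i + j <= mdeg m)%N (p * q).
Proof. by move=> ip jq; apply: (supp_inM ip jq) => a b ia jb; rewrite mdegD leq_add. Qed.

Definition core_region (m : nat) (mm : 'X_{1..2}) : Prop :=
  [/\ mm i1 <= mm i0, mm i0 <= m & m.+1 * mm i0 + m.+1 <= mm i1 + m * m.+1]%N.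

Section XiSupport.
Context {R : comNzRingType}.
Local Notation x := (xvar : {mpoly R[2]}).
Local Notation y := (yvar : {mpoly R[2]}).

Lemma xvarXn k : x ^+ k = 'X_[U_(i0) *+ k].
Proof. by rewrite /xvar mpolyXn. Qed.

Lemma yvarXn k : y ^+ k = 'X_[U_(i1) *+ k].
Proof. by rewrite /yvar mpolyXn. Qed.

Lemma supp_Nyvar k : supp_in (fun mm => mm i0 = 0 /\ mm i1 = k)%N ((- y) ^+ k).
Proof.
by rewrite exprNn yvarXn; apply: supp_in_signM; apply: supp_inX; rewrite /= !mnm2E /=; lia.
Qed.

Lemma supp_1By : supp_in (fun mm => mm i0 = 0 /\ mm i1 <= 1)%N (1 - y).
Proof. by apply: supp_inB; [apply: supp_in1 | apply: supp_inX]; rewrite /= !mnm2E. Qed.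

Lemma supp_1Bxy : supp_in (fun mm => mm i0 = mm i1 /\ mm i1 <= 1)%N (1 - x * y).
Proof.
apply: supp_inB; first by apply: supp_in1; rewrite /= !mnm2E.
by rewrite /xvar /yvar -mpolyXD; apply: supp_inX; rewrite /= !mnm2E.
Qed.

Lemma supp_1By_diff m :
  supp_in (fun mm => mm i0 = 0 /\ mm i1 <= m)%N ((1 - y) ^+ m.+1 - (- y) ^+ m.+1).
Proof.
elim: m => [|m IH]; first by rewrite !expr1 opprK subrK; apply: supp_in1; rewrite /= !mnm2E.
have -> : (1 - y) ^+ m.+2 - (- y) ^+ m.+2 =
    (1 - y) * ((1 - y) ^+ m.+1 - (- y) ^+ m.+1) + (- y) ^+ m.+1.
  by rewrite [in LHS]exprS [(- y) ^+ m.+2]exprS; ring.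
apply: supp_inD; last by apply: supp_inW (supp_Nyvar _) => mm [-> ->].
by apply: (supp_inM supp_1By IH) => a b [a0 a1] [b0 bm]; rewrite !mnmDE; lia.
Qed.

Lemma supp_xi_core m : supp_in (core_region m) (xi_core x y m).
Proof.
elim: m => [|m IH]; first by rewrite xi_core0; apply: supp_in0.
rewrite xi_coreS; apply: supp_inD.
  by apply: (supp_inM supp_1Bxy IH) => a b [ab a1] [b10 b0m bm]; split; rewrite !mnmDE; nia.
rewrite xvarXn.
apply: (supp_inM (supp_inX (S := fun mm => mm = U_(i0) *+ m)%MM erefl) (supp_1By_diff m)).
by move=> a b -> [b0 bm]; split; rewrite /= !mnm2E /= b0; nia.
Qed.

Lemma xi_coreE m : xi x y m = xi_core x y m + (-1) ^+ m * 'X_[apex m].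
Proof. by rewrite /xi_core xvarXn yvarXn -mpolyXD subrK. Qed.

Lemma supp_xi m : supp_in (newton_triangle m) (xi x y m).
Proof.
rewrite xi_coreE; apply: supp_inD.
  by apply: supp_inW (supp_xi_core m) => mm [? ? ?]; split; [split|]; nia.
apply: supp_in_signM; apply: supp_inX.
by rewrite /newton_triangle /outer_triangle apex0 apex1; split; [split|]; nia.
Qed.

Lemma mcoeff0_xi m : (xi x y m.+1)@_0 = 1.
Proof.
have x0 : x@_0 = 0 by rewrite mcoeffX mnm1_eq0.
have y0 : y@_0 = 0 by rewrite mcoeffX mnm1_eq0.
by rewrite (rmorph_xi _ _ (mcoeff 0)) /= x0 y0 -xiS xi00.
Qed.

Lemma mcoeff_xi_corner m : (xi x y m.+1)@_(U_(i0) *+ m) = 1.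
Proof.
rewrite xiS mcoeffD mulrBl mul1r mcoeffB -mulrA mulrCA mcoeffXM_eq0; last first.
  by rewrite /= !mnm2E /= mul0n.
rewrite subr0 (supp_in_mcoeff (supp_xi m)) => [|[[_]]]; last by rewrite /= !mnm2E /=; nia.
rewrite xvarXn -[X in _@_X]addm0 mcoeffXM add0r.
by rewrite rmorphXn rmorphB rmorph1 /= mcoeffX mnm1_eq0 subr0 expr1n.
Qed.

Lemma mcoeff_xi_apex m : (xi x y m)@_(apex m) = (-1) ^+ m.
Proof.
rewrite xi_coreE mcoeffD mcoeff_signM mcoeffX eqxx mulr1.
by rewrite (supp_in_mcoeff (supp_xi_core m)) ?add0r // => -[]; rewrite apex0 apex1; lia.
Qed.

Local Notation xs := (xi (x + 1) (y + 1)).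

Lemma shift_at_xi m : shift_at 1 1 (xi x y m) = xs m.
Proof.
by rewrite /shift_at (rmorph_xi _ _ (comp_mpoly _)) /= !comp_mpolyXU /= mpolyC1.
Qed.

Lemma supp_xi_shift m : supp_in (fun mm => m <= mdeg mm)%N (xs m).
Proof.
have deg_X i : supp_in (fun mm => 1 <= mdeg mm)%N ('X_i : {mpoly R[2]}).
  by apply: supp_inX; rewrite mdeg1.
have deg0 (p : {mpoly R[2]}) : supp_in (fun mm => 0 <= mdeg mm)%N p by [].
have deg_F : supp_in (fun mm => 1 <= mdeg mm)%N (- (x * (y + 1) + y)).
  apply: supp_inN; apply: supp_inD (deg_X _).
  exact: supp_in_mdegM (deg_X _) (deg0 _).
elim: m => [|m IH]; first exact: deg0.
rewrite xi_shiftS; apply: supp_inD; first exact: supp_in_mdegM deg_F IH.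
apply: (supp_in_mdegM (i := 0) (deg0 _)).
by rewrite exprNn yvarXn; apply: supp_in_signM; apply: supp_inX; rewrite mdegMn mdeg1 mul1n.
Qed.

Lemma mcoeff_xi_shift m : (xs m)@_(U_(i1) *+ m) = (-1) ^+ m * m.+1%:R.
Proof.
elim: m => [|m IH].
  by rewrite mulm0n mcoeffD mcoeff1 eqxx /yvar mcoeffX mnm1_eq0 add0r expr0 mul1r.
have [G xG] : exists G, (x + 1) ^+ m = 1 + x * G.
  have := subrXX (x + 1) 1 m; rewrite expr1n addrK => e.
  by exists (\sum_(i < m) (x + 1) ^+ (m.-1 - i) * 1 ^+ i); rewrite -e; ring.
have -> : xs m.+1 =
    - (y * xs m) + (- y) ^+ m.+1 + x * (- ((y + 1) * xs m) + G * (- y) ^+ m.+1).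
  by rewrite xi_shiftS xG; ring.
rewrite !mcoeffD mcoeffXM_eq0; last by rewrite /= !mnm2E /= mul0n.
rewrite (exprNn y) yvarXn mcoeff_signM mcoeffX eqxx mcoeffN mulmS /yvar mcoeffXM IH.
by rewrite /= -!natr1 !exprS; ring.
Qed.

End XiSupport.

Lemma vanishes_to_order_xi m : vanishes_to_order (xi (xvar : {mpoly int[2]}) yvar m) 1 1 m.
Proof.
rewrite /vanishes_to_order shift_at_xi; split; first exact: supp_xi_shift.
exists (U_(i1) *+ m)%MM; last by rewrite mdegMn mdeg1 mul1n.
by rewrite mcoeff_msupp mcoeff_xi_shift mulf_neq0 ?signr_eq0 ?pnatr_eq0.
Qed.

Lemma to_field_xi (K : fieldType) m : to_field K (xi xvar yvar m) = xi xvar yvar m.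
Proof.
have := rmorph_xi xvar yvar (map_mpoly (n := 2) (intr : {rmorphism int -> K})) m.
by rewrite /= /xvar /yvar !map_mpolyX; apply.
Qed.

Lemma irreducible_xi (K : fieldType) m : (0 < m)%N ->
  irreducible_elt (xi (xvar : {mpoly K[2]}) yvar m).
Proof.
case: m => [//|m] _; apply: (irreducible_outer_triangle _ m.+1) => //.
- by move=> mm /supp_xi [].
- by rewrite mcoeff_msupp mcoeff0_xi oner_neq0.
- by rewrite mcoeff_msupp mcoeff_xi_apex signr_eq0.
Qed.

(** * Newton polygon *)

Lemma in_conv_le {S : seq (rat * rat)} {pt} (al be ga : rat) : in_conv S pt ->
  (forall s, s \in S -> al * s.1 + be * s.2 <= ga) -> al * pt.1 + be * pt.2 <= ga.
Proof.
move=> [lam [lam_ge0 [lam_sum [-> ->]]]] S_le.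
rewrite !mulr_sumr -big_split /= -[ga]mul1r -lam_sum mulr_suml.
apply: ler_sum => i _; rewrite mulrCA (mulrCA be) -mulrDr ler_wpM2l //.
exact/S_le/mem_nth.
Qed.

Lemma in_conv_subset {T S : seq (rat * rat)} {pt} :
  {subset T <= S} -> in_conv T pt -> in_conv S pt.
Proof.
move=> TS [lam [lam_ge0 [lam_sum [pt1 pt2]]]].
have fP (i : 'I_(size T)) : (index (nth (0%R, 0%R) T i) S < size S)%N.
  by rewrite index_mem TS ?mem_nth.
pose f i := Ordinal (fP i).
have nth_f (i : 'I_(size T)) : nth (0, 0) S (f i) = nth (0, 0) T i.
  by rewrite nth_index ?TS ?mem_nth.
pose lam' j := \sum_(i | f i == j) lam i.
have lam'E (c : rat * rat -> rat) :
    \sum_j lam' j * c (nth (0, 0) S j) = \sum_i lam i * c (nth (0, 0) T i).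
  rewrite [RHS](partition_big f predT) //=; apply: eq_bigr => j _.
  by rewrite mulr_suml; apply: eq_bigr => i /eqP <-; rewrite nth_f.
exists lam'; split; first by move=> j; apply: sumr_ge0 => i _.
split; first by rewrite -lam_sum [RHS](partition_big f predT).
by rewrite pt1 pt2 !lam'E.
Qed.

Definition triangle_ineqs (m : nat) (pt : rat * rat) : Prop :=
  [/\ 0 <= pt.2, pt.1 <= m%:R, m%:R * pt.2 <= (m%:R + 1) * pt.1
    & (m%:R + 1) * pt.1 + (m%:R + 1) <= pt.2 + m%:R * (m%:R + 1)].

Lemma in_conv_triangle_ineqs {m} {S : seq (rat * rat)} {pt} :
  in_conv S pt -> (forall s, s \in S -> triangle_ineqs m s) -> triangle_ineqs m pt.
Proof.
move=> hull S_tri.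
have le al be ga : (forall s, s \in S -> al * s.1 + be * s.2 <= ga) ->
    al * pt.1 + be * pt.2 <= ga.
  exact: (in_conv_le al be ga hull).
split.
- suff: 0 * pt.1 + (-1) * pt.2 <= 0 by lra.
  by apply: le => s /S_tri[]; lra.
- suff: 1 * pt.1 + 0 * pt.2 <= m%:R by lra.
  by apply: le => s /S_tri[]; lra.
- suff: - (m%:R + 1) * pt.1 + m%:R * pt.2 <= 0 by lra.
  by apply: le => s /S_tri[]; lra.
- suff: (m%:R + 1) * pt.1 + (-1) * pt.2 <= m%:R * (m%:R + 1) - (m%:R + 1) by lra.
  by apply: le => s /S_tri[]; lra.
Qed.

Lemma in_conv3 {v0 v1 v2 pt : rat * rat} (l0 l1 l2 : rat) :
  0 <= l0 -> 0 <= l1 -> 0 <= l2 -> l0 + l1 + l2 = 1 ->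
  pt.1 = l0 * v0.1 + l1 * v1.1 + l2 * v2.1 ->
  pt.2 = l0 * v0.2 + l1 * v1.2 + l2 * v2.2 ->
  in_conv [:: v0; v1; v2] pt.
Proof.
move=> l0_ge0 l1_ge0 l2_ge0 l_sum pt1 pt2.
exists (fun i : 'I_3 => nth 0 [:: l0; l1; l2] i); split; first by case=> [[|[|[|//]]] ?].
by rewrite !big_ord_recl !big_ord0 /= !addr0 !addrA.
Qed.

Lemma triangle_ineqs_in_conv {m pt} : (0 < m)%N -> triangle_ineqs m pt ->
  in_conv [:: (0, 0); (m%:R - 1, 0); (m%:R, m.+1%:R)] pt.
Proof.
case: pt => a b; rewrite -natr1; case: m => [//|[|k]] _ [/= b_ge0 a_le b_le b_ge].
  by apply: (in_conv3 (1 - a) 0 a) => /=; lra.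
set M := k.+2%:R : rat.
have M1_gt0 : 0 < M - 1 by rewrite /M -natr1 addrK ltr0n.
have D_gt0 : 0 < (M + 1) * (M - 1) by rewrite mulr_gt0 // ltr_pwDr.
apply: (in_conv3 (((M + 1) * (M - 1) - (M + 1) * a + b) / ((M + 1) * (M - 1)))
                 (((M + 1) * a - M * b) / ((M + 1) * (M - 1))) (b / (M + 1))) => /=.
- by apply: divr_ge0; lra.
- by apply: divr_ge0; lra.
- by apply: divr_ge0; lra.
- by field; lra.
- by field; lra.
- by field; lra.
Qed.

Lemma newton_polygon_xi (R : comNzRingType) m : (0 < m)%N -> forall pt,
  newton_polygon (xi (xvar : {mpoly R[2]}) yvar m) pt <->
  in_conv [:: (0, 0); (m%:R - 1, 0); (m%:R, m.+1%:R)] pt.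
Proof.
move=> m_gt0 pt; split=> [hull|].
  apply: (triangle_ineqs_in_conv m_gt0 (in_conv_triangle_ineqs hull _)).
  move=> _ /mapP[mm /supp_xi [[le_m slope] edge] ->]; rewrite /expvec /=.
  by split; rewrite ?natr1 -?natrM -?natrD ?ler_nat.
case: m m_gt0 => [//|k] _; apply: in_conv_subset => t.
rewrite !inE => /or3P[] /eqP ->; apply/mapP.
- exists 0%MM; first by rewrite mcoeff_msupp mcoeff0_xi oner_neq0.
  by rewrite /expvec !mnm0E.
- exists (U_(i0) *+ k)%MM; first by rewrite mcoeff_msupp mcoeff_xi_corner oner_neq0.
  by rewrite /expvec !mnm2E /= mul1n mul0n -natr1 addrK.
- exists (apex k.+1); first by rewrite mcoeff_msupp mcoeff_xi_apex signr_eq0.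
  by rewrite /expvec apex0 apex1.
Qed.

Theorem proposition3p1 :
  let f : {mpoly int[2]} := 1 - xvar * yvar in
  let g : {mpoly int[2]} := 1 - xvar * yvar ^+ 2 in
  let h : {mpoly int[2]} := 1 - yvar in
  exists xi : nat -> {mpoly int[2]},
    [/\ xi 1%N = g,
        (forall m : nat, (1 <= m)%N ->
           xi m.+1 = f * xi m + xvar ^+ m * h ^+ m.+1) /\
        (forall m : nat, (1 <= m)%N ->
           xi m.+1 = xvar * h * xi m + f ^+ m.+1),
        (forall m : nat, (1 <= m)%N -> vanishes_to_order (xi m) 1 1 m),
        (forall m : nat, (1 <= m)%N -> forall pt : rat * rat,
           newton_polygon (xi m) pt <->
           in_conv [:: (0, 0); (m%:R - 1, 0); (m%:R, m.+1%:R)] pt)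
      & (forall m : nat, (1 <= m)%N -> forall K : fieldType,
           irreducible_elt (to_field K (xi m)))].
Proof.
move=> f g h; exists (xi xvar yvar); split.
- exact: xi1.
- by split=> m _; [exact: xiS | exact: xiS_dual].
- by move=> m _; exact: vanishes_to_order_xi.
- by move=> m; exact: newton_polygon_xi.
- by move=> m m_gt0 K; rewrite to_field_xi; exact: irreducible_xi.
Qed.
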